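(* For $0\le r_1,r_2\le n$, $0\le s\le N(r_1,r_2)$ and $t\in\mathbb C$: $$\lambda_s^{r_1,r_2}(t,n)=\sum_{j=0}^s(-1)^j\binom{t}{j}\frac{[s]_j\,[n-s+1]_j}{[n-r_1]_j\,[r_2]_j};$$ if $s\ge1$, then $$\Delta\lambda_s^{r_1,r_2}(t,n)=-\frac{s(n-s+1)}{r_2(n-r_1)}\,\lambda_{s-1}^{r_1-1,r_2-1}(t,n-2);$$ and the leading coefficient (of $t^s$) of $\lambda_s^{r_1,r_2}(t,n)$ is $$a_s^{r_1,r_2}(n)=(-1)^s\frac{[n-s+1]_s}{[n-r_1]_s\,[r_2]_s}.$$
   Context: For a finite set $\Omega$ with $|\Omega|=n\ge1$, let $G=S(\Omega)$, $X=\mathcal P(\Omega)$, $X_r=\{x\in X:|x|=r\}$, with $G$ acting on $L^2(X)$ (complex functions on $X$; $L^2(X_r)$ = functions supported on $X_r$) by $(\rho(g)\psi)(x)=\psi(g^{-1}x)$. For $0\le s\le\min(r,n-r)$, $L^2(X_r)_s$ is the unique irreducible $G$-subspace of $L^2(X_r)$ isomorphic to the irreducible representation associated with the partition $(n-s,s)$. $N(r_1,r_2)=\min(r_1,n-r_1,r_2,n-r_2)$. For $0\le s\le N(r_1,r_2)$, $\Lambda_s^{r_1,r_2}$ is a $G$-equivariant map $L^2(X)\to L^2(X)$ sending $L^2(X_{r_1})_s$ into $L^2(X_{r_2})_s$ and vanishing on its orthogonal complement, with kernel $\lambda$ defined on integers $\max(0,r_2-r_1)\le k\le\min(n-r_1,r_2)$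 by $(\Lambda_s^{r_1,r_2}\psi)(x_2)=\sum_{x_1\in X_{r_1}}\lambda(|x_2\setminus x_1|)\psi(x_1)$. The kernel agrees on its domain with a unique polynomial of degree $s$ which is nonzero at $0$; $\Lambda_s^{r_1,r_2}$ is normalized so that this polynomial takes the value $1$ at $t=0$, and this polynomial is denoted $\lambda_s^{r_1,r_2}(t,n)$; the same construction with a set of $n-2$ elements gives $\lambda_{s'}^{r_1',r_2'}(t,n-2)$. $\Delta h(t)=h(t+1)-h(t)$; $\binom{t}{j}=[t]_j/j!$; $[\alpha]_k=\alpha(\alpha-1)\cdots(\alpha-k+1)$. *)

From HB Require Import structures.
From mathcomp Require Import all_boot all_order all_algebra all_fingroup.
From mathcomp Require Import reals.
From mathcomp Require Import complex.
Set Implicit Arguments. Unset Strict Implicit. Unset Printing Implicit Defensive.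
Import Order.TTheory GRing.Theory Num.Theory.
Local Open Scope ring_scope.

(* Throughout, R : realType (a model of the real numbers) and R[i] is the field
   of complex numbers.  Omega = 'I_n, X = P(Omega) = {set 'I_n}. *)

Definition L2 (R : realType) (n : nat) : vectType R[i] := {ffun {set 'I_n} -> R[i]^o}.

Definition rho (R : realType) (n : nat) (g : {perm 'I_n}) (psi : L2 R n) : L2 R n :=
  [ffun x : {set 'I_n} => psi ((g^-1)%g @: x)].

Definition dotL2 (R : realType) (n : nat) (f h : L2 R n) : R[i] :=
  \sum_(x : {set 'I_n}) (f x : R[i]) * (h x : R[i])^*.

(* f lies in L^2(X_r): f is supported on X_r = {x : |x| = r} *)
Definition supported_on (R : realType) (n r : nat) (f : L2 R n) : Prop :=
  forall x : {set 'I_n}, #|x| != r -> f x = 0.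

Definition Ginvariant (R : realType) (n : nat) (V : {vspace L2 R n}) : Prop :=
  forall (g : {perm 'I_n}) (v : L2 R n), v \in V -> rho g v \in V.

Definition Girreducible (R : realType) (n : nat) (V : {vspace L2 R n}) : Prop :=
  [/\ Ginvariant V, V != 0%VS &
      forall W : {vspace L2 R n}, (W <= V)%VS -> Ginvariant W -> W = 0%VS \/ W = V].

Definition Giso (R : realType) (n : nat) (V W : {vspace L2 R n}) : Prop :=
  exists f : 'Hom(L2 R n, L2 R n),
    [/\ (f @: V)%VS = W, \dim W = \dim V &
        forall (g : {perm 'I_n}) (v : L2 R n), v \in V -> f (rho g v) = rho g (f v)].

Definition delta (R : realType) (n : nat) (x : {set 'I_n}) : L2 R n :=
  [ffun y : {set 'I_n} => ((y == x)%:R : R[i])].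

(* Specht module S^(n-s,s), realised inside the permutation module
   M^(n-s,s) = L^2(X_s) by identifying a tabloid with the set of entries of its
   second row.  A tableau of shape (n-s,s) is determined (up to the order of the
   remaining entries of the first row, which does not affect the polytabloid)
   by its first s columns (a j, b j), j < s, with a j in row 1 and b j in row 2;
   all 2s entries are distinct. The column group is generated by the
   transpositions (a j b j); the polytabloid is
      e_T = sum_{sigma in C_T} sgn(sigma) {sigma T}. *)
Definition tableau_ok (n s : nat) (a b : {ffun 'I_s -> 'I_n}) : bool :=
  [&& injectiveb a, injectiveb b & [forall i, forall j, a i != b j]].

Definition polytabloid (R : realType) (n s : nat) (a b : {ffun 'I_s -> 'I_n}) : L2 R n :=
  \sum_(e : {ffun 'I_s -> bool})
     ((-1) ^+ #|[set i | e i]| : R[i]) *: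
       delta R [set (if e i then a i else b i) | i in 'I_s].

Definition Specht (R : realType) (n s : nat) : {vspace L2 R n} :=
  <<[seq polytabloid R ab.1 ab.2 |
      ab <- enum [pred ab : {ffun 'I_s -> 'I_n} * {ffun 'I_s -> 'I_n} |
                   tableau_ok ab.1 ab.2]]>>%VS.

Definition is_L2rs (R : realType) (n r s : nat) (V : {vspace L2 R n}) : Prop :=
  [/\ forall v, v \in V -> supported_on r v,
      Girreducible V & Giso V (Specht R n s)].

(* p is the polynomial lambda_s^{r1,r2}(t,n): there is a G-equivariant map
   Lambda_s^{r1,r2} sending L^2(X_r1)_s into L^2(X_r2)_s, vanishing on the
   orthogonal complement of L^2(X_r1)_s, with kernel lam on the integers
   max(0,r2-r1) <= k <= min(n-r1,r2); p has degree s, agrees with lam on that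
   domain, and p(0) = 1 (normalisation). *)
Definition is_lambda_poly (R : realType) (n r1 r2 s : nat) (p : {poly R[i]}) : Prop :=
  exists (V1 V2 : {vspace L2 R n}) (Lam : 'Hom(L2 R n, L2 R n)) (lam : nat -> R[i]),
  [/\ is_L2rs r1 s V1, is_L2rs r2 s V2 &
      [/\ forall (g : {perm 'I_n}) (psi : L2 R n), Lam (rho g psi) = rho g (Lam psi),
      forall psi : L2 R n, psi \in V1 -> Lam psi \in V2,
      forall psi : L2 R n, (forall v, v \in V1 -> dotL2 psi v = 0) -> Lam psi = 0 &
      forall (psi : L2 R n) (x2 : {set 'I_n}), #|x2| = r2 ->
        Lam psi x2 = \sum_(x1 : {set 'I_n} | #|x1| == r1) lam #|x2 :\: x1| * psi x1]] /\
  [/\ size p = s.+1,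
      p.[0] = 1 &
      forall k : nat, (r2 - r1 <= k <= minn (n - r1) r2)%N -> p.[k%:R] = lam k].

Definition ffact (K : pzRingType) (alpha : K) (k : nat) : K :=
  \prod_(i < k) (alpha - i%:R).

Definition binomC (K : fieldType) (t : K) (j : nat) : K := ffact t j / (j`!)%:R.

Definition Nmin (n r1 r2 : nat) : nat := minn (minn r1 (n - r1)) (minn r2 (n - r2)).

From HB Require Import structures.
From mathcomp Require Import all_boot all_order all_algebra all_fingroup.
From mathcomp Require Import reals.
From mathcomp Require Import complex.
From mathcomp Require Import zify ring.
Set Implicit Arguments. Unset Strict Implicit. Unset Printing Implicit Defensive.
Import Order.TTheory GRing.Theory Num.Theory.
Local Open Scope ring_scope.

(* L^2(X_r1)_s is isomorphic to the Specht module, so it contains a nonzero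
   vector changing sign under every column transposition of a tableau.  Each
   (s-1)-set misses a whole column, so the equivariant map summing over
   r1-supersets of (s-1)-sets kills that vector, hence by irreducibility all of
   L^2(X_r1)_s.  The indicator of the r1-supersets of an (s-1)-set z is thus
   orthogonal to L^2(X_r1)_s, and Lambda kills it:
     sum_{x1 ⊇ z, |x1| = r1} lambda(|x2 \ x1|) = 0   for every r2-set x2.
   Expanding lambda = sum_j d_j binom(t, j), a double count turns these into s
   linear equations in the d_j which, with d_0 = 1, determine them; the closed
   form satisfies them by an alternating Vandermonde identity.  The difference
   formula and the leading coefficient are read off the binomial expansion. *)

Section FallingFactorial.
Variable K : numFieldType.

Lemma ffactSl (x : K) j : ffact x j.+1 = x * ffact (x - 1) j.
Proof.
rewrite /ffact big_ord_recl subr0; congr (_ * _); apply: eq_bigr => i _.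
by rewrite lift0 -natr1 opprD addrA addrAC.
Qed.

Lemma ffactSr (x : K) j : ffact x j.+1 = ffact x j * (x - j%:R).
Proof. by rewrite /ffact big_ord_recr. Qed.

Lemma ffact_natr (k j : nat) : ffact (k%:R : K) j = (k ^_ j)%:R.
Proof.
elim: j => [|j IH]; first by rewrite /ffact big_ord0 ffactn0.
rewrite ffactSr IH ffactnSr natrM.
by case: (leqP j k) => [/natrB -> // | hjk]; rewrite ffact_small // !mul0r.
Qed.

Lemma natr_fact_neq0 m : (m`!%:R : K) != 0.
Proof. by rewrite pnatr_eq0 -lt0n fact_gt0. Qed.

Lemma binomC_natr (k j : nat) : binomC (k%:R : K) j = 'C(k, j)%:R.
Proof. by rewrite /binomC ffact_natr -bin_ffact natrM mulfK ?natr_fact_neq0. Qed.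

Lemma binomC0 (t : K) : binomC t 0 = 1.
Proof. by rewrite /binomC /ffact big_ord0 fact0 divr1. Qed.

Lemma binomC_addr1 (t : K) j : binomC (t + 1) j.+1 - binomC t j.+1 = binomC t j.
Proof.
rewrite /binomC ffactSl addrK ffactSr factS natrM -natr1.
have := natr_fact_neq0 j; have : (j.+1%:R : K) != 0 by rewrite pnatr_eq0.
rewrite -natr1 => hj1 hjf; field; exact/andP.
Qed.

End FallingFactorial.

Section NewtonBasis.
Variable K : numFieldType.

Definition binom_poly (j : nat) : {poly K} :=
  (j`!%:R)^-1 *: \prod_(i < j) ('X - (i%:R)%:P).

Lemma horner_binom_poly j t : (binom_poly j).[t] = binomC t j.
Proof.
rewrite /binom_poly hornerZ horner_prod /binomC /ffact mulrC; congr (_ * _).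
by apply: eq_bigr => i _; rewrite hornerXsubC.
Qed.

Lemma size_binom_poly j : size (binom_poly j) = j.+1.
Proof.
rewrite /binom_poly size_scale ?invr_eq0 ?natr_fact_neq0 // -big_filter.
by rewrite size_prod_XsubC; have [e _ _ [_ ->]] := big_enumP; rewrite card_ord.
Qed.

Lemma lead_coef_binom_poly j : lead_coef (binom_poly j) = (j`!%:R)^-1.
Proof. by rewrite /binom_poly lead_coefZ (monicP (monic_prod_XsubC _ _ _)) mulr1. Qed.

Definition newton_poly (d : nat -> K) (k : nat) : {poly K} :=
  \sum_(j < k) d j *: binom_poly j.

Lemma horner_newton_poly d k t :
  (newton_poly d k).[t] = \sum_(j < k) d j * binomC t j.
Proof. by rewrite horner_sum; apply: eq_bigr => j _; rewrite hornerZ horner_binom_poly. Qed.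

Lemma size_newton_poly d k : (size (newton_poly d k) <= k)%N.
Proof.
rewrite /newton_poly; elim: k => [|k IH]; first by rewrite big_ord0 size_poly0.
rewrite big_ord_recr /=; apply: leq_trans (size_polyD _ _) _.
rewrite geq_max (leq_trans IH) //=.
by apply: leq_trans (size_scale_leq _ _) _; rewrite size_binom_poly.
Qed.

Lemma coef_newton_poly_last d k : (newton_poly d k.+1)`_k = d k / k`!%:R.
Proof.
rewrite /newton_poly big_ord_recr /= coefD coefZ.
have /leq_sizeP -> // := size_newton_poly d k; rewrite add0r.
by have := lead_coef_binom_poly k; rewrite /lead_coef size_binom_poly => ->.
Qed.

Lemma newton_polyP k (p : {poly K}) :
  (size p <= k)%N -> exists d : nat -> K, p = newton_poly d k.
Proof.
elim: k p => [|k IH] p hp.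
  by exists (fun _ => 0); rewrite /newton_poly big_ord0; apply/eqP; rewrite -size_poly_eq0 -leqn0.
set c := p`_k * k`!%:R.
have hq : (size (p - c *: binom_poly k)%R <= k)%N.
  apply/leq_sizeP => j hj; rewrite coefB coefZ.
  case: (ltngtP j k) => [|hkj|->]; first by rewrite ltnNge hj.
    have /leq_sizeP -> // := hp; have /leq_sizeP -> // : (size (binom_poly k) <= k.+1)%N.
      by rewrite size_binom_poly.
    by rewrite mulr0 subr0.
  have := lead_coef_binom_poly k; rewrite /lead_coef size_binom_poly /= => ->.
  by rewrite /c mulfK ?natr_fact_neq0 // subrr.
have [d Hd] := IH _ hq.
exists (fun j => if j == k then c else d j).
rewrite /newton_poly big_ord_recr /= eqxx -[p](subrK (c *: binom_poly k)) Hd.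
by congr (_ + _); apply: eq_bigr => i _; rewrite ltn_eqF.
Qed.

Lemma newton_poly_addr1 d k t :
  (newton_poly d k.+1).[t + 1] - (newton_poly d k.+1).[t] =
  (newton_poly (fun j => d j.+1) k).[t].
Proof.
rewrite !horner_newton_poly -sumrB big_ord_recl /= !binomC0 subrr add0r.
by apply: eq_bigr => i _; rewrite -mulrBr binomC_addr1.
Qed.

Lemma newton_poly_eq0 d k : newton_poly d k = 0 -> forall j, (j < k)%N -> d j = 0.
Proof.
move=> d0 j; elim/ltn_ind: j => j IH hj.
have := horner_newton_poly d k j%:R; rewrite d0 horner0 (bigD1 (Ordinal hj)) //=.
rewrite binomC_natr binn mulr1 big1 ?addr0 => [<- //|i /eqP hij].
case: (ltngtP i j) => h; first by rewrite IH ?mul0r // (ltn_trans h).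
  by rewrite binomC_natr bin_small // mulr0.
by case: hij; apply: val_inj.
Qed.

(* The value at 0 and the values at [k] consecutive positive integers give
   [k.+1] roots of a polynomial of size at most [k.+1]. *)
Lemma newton_poly_roots_eq0 d k a : (0 < a)%N -> d 0%N = 0 ->
  (forall m, (a <= m < a + k)%N -> (newton_poly d k.+1).[m%:R] = 0) ->
  newton_poly d k.+1 = 0.
Proof.
move=> a_gt0 d0 droot; apply/eqP; apply: contraT => nz.
set rs := 0 :: [seq ((a + i)%N%:R : K) | i <- iota 0 k].
suff [Hr Hu] : all (root (newton_poly d k.+1)) rs /\ uniq rs.
  have := max_poly_roots nz Hr Hu.
  by rewrite /= size_map size_iota ltnNge size_newton_poly.
split.
- apply/allP => x; rewrite inE => /orP [/eqP -> | /mapP [i hi ->]].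
    rewrite /root -(mulr0n 1) horner_newton_poly big_ord_recl /= d0 mul0r add0r.
    by rewrite big1 // => i _; rewrite binomC_natr bin0n mulr0.
  by rewrite /root droot //; move: hi; rewrite mem_iota; lia.
- rewrite cons_uniq map_inj_uniq ?iota_uniq ?andbT; last first.
    by move=> i j /eqP; rewrite eqr_nat eqn_add2l => /eqP.
  by apply/mapP => -[i _] /eqP; rewrite eq_sym pnatr_eq0; lia.
Qed.

End NewtonBasis.

Section LambdaCoefficients.
Variable K : numFieldType.

Lemma sum_alt_binom (m r s : nat) : (m <= r)%N ->
  \sum_(j < s.+1) (-1) ^+ j * 'C(m, j)%:R * 'C(r - j, s - j)%:R = 'C(r - m, s)%:R :> K.
Proof.
elim: m r s => [|m IH] r s hm.
  rewrite big_ord_recl /= expr0 !mul1r !subn0 big1 ?addr0 // => i _.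
  by rewrite bin0n mulr0 mul0r.
case: s => [|s]; first by rewrite big_ord_recl big_ord0 !bin0 addr0 !mulr1.
have IHr := IH r s.+1 (ltnW hm); have IHr1 := IH r.-1 s (ltac:(lia)).
rewrite big_ord_recl /= expr0 mul1r bin0 mul1r subn0 in IHr.
rewrite big_ord_recl /= expr0 mul1r bin0 mul1r subn0.
have -> : \sum_(i < s.+1) (-1) ^+ lift ord0 i * 'C(m.+1, lift ord0 i)%:R *
    'C(r - lift ord0 i, s.+1 - lift ord0 i)%:R =
  \sum_(i < s.+1) (-1) ^+ lift ord0 i * 'C(m, lift ord0 i)%:R *
    'C(r - lift ord0 i, s.+1 - lift ord0 i)%:R
  - \sum_(i < s.+1) (-1) ^+ i * 'C(m, i)%:R * 'C(r.-1 - i, s - i)%:R :> K.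
  rewrite -sumrB; apply: eq_bigr => i _; rewrite lift0 binS natrD subSS.
  have -> : (r - i.+1 = r.-1 - i)%N by lia.
  by rewrite exprS; ring.
rewrite addrA IHr IHr1.
have -> : (r - m = (r - m.+1).+1)%N by lia.
have -> : (r.-1 - m = r - m.+1)%N by lia.
by rewrite binS natrD addrK.
Qed.

Definition lambda_coef (n r1 r2 s j : nat) : K :=
  (-1) ^+ j * (ffact (s%:R : K) j * ffact ((n - s + 1)%N%:R) j)
  / (ffact ((n - r1)%N%:R) j * ffact (r2%:R) j).

Lemma lambda_coef0 n r1 r2 s : lambda_coef n r1 r2 s 0 = 1.
Proof. by rewrite /lambda_coef /ffact !big_ord0 expr0 !mul1r invr1. Qed.

Lemma natr_ffact_fact (k j : nat) : (j <= k)%N -> (k ^_ j)%:R = k`!%:R / (k - j)`!%:R :> K.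
Proof. by move=> h; rewrite -(ffact_fact h) natrM mulfK ?natr_fact_neq0. Qed.

Lemma natr_bin_fact (a b : nat) : (b <= a)%N ->
  'C(a, b)%:R = a`!%:R / (b`!%:R * (a - b)`!%:R) :> K.
Proof. by move=> h; rewrite -(bin_fact h) !natrM mulfK // mulf_neq0 ?natr_fact_neq0. Qed.

(* Up to a factor independent of [j], [lambda_coef] times the binomial weight
   of the counting identity is the summand of [sum_alt_binom]. *)
Lemma lambda_coef_binE (n r1 r2 s j : nat) :
  (s.+1 <= r1)%N -> (s.+1 <= n - r1)%N -> (s.+1 <= r2)%N -> (j <= s.+1)%N ->
  lambda_coef n r1 r2 s.+1 j * 'C(n - s - j, r1 - s)%:R =
  'C(n - s, r1 - s)%:R / 'C(r2, s.+1)%:R * ((-1) ^+ j * 'C(r2 - j, s.+1 - j)%:R).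
Proof.
move=> h1 h2 h3 hj; rewrite /lambda_coef !ffact_natr.
have -> : (n - s.+1 + 1 = n - s)%N by lia.
rewrite !natr_ffact_fact ?natr_bin_fact; try lia.
have -> : (n - s - j - (r1 - s) = n - r1 - j)%N by lia.
have -> : (r2 - j - (s.+1 - j) = r2 - s.+1)%N by lia.
have -> : (n - s - (r1 - s) = n - r1)%N by lia.
have hf := natr_fact_neq0 K; set f := fun m => (m`!%:R : K); rewrite -!/(f _) in hf *.
by field; rewrite ?hf //; repeat (apply/andP; split); rewrite ?mulf_neq0 ?hf.
Qed.

Lemma lambda_coef_eqn (n r1 r2 s m : nat) :
  (s.+1 <= r1)%N -> (s.+1 <= n - r1)%N -> (s.+1 <= r2)%N -> (r2 - s <= m <= r2)%N ->
  \sum_(j < s.+2) lambda_coef n r1 r2 s.+1 j * 'C(m, j)%:R * 'C(n - s - j, r1 - s)%:R = 0.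
Proof.
move=> h1 h2 h3 /andP [hm1 hm2].
transitivity ('C(n - s, r1 - s)%:R / 'C(r2, s.+1)%:R *
   \sum_(j < s.+2) (-1) ^+ j * 'C(m, j)%:R * 'C(r2 - j, s.+1 - j)%:R : K).
  rewrite mulr_sumr; apply: eq_bigr => j _.
  by rewrite mulrAC lambda_coef_binE //; [ring | exact: ltn_ord j].
by rewrite sum_alt_binom // (@bin_small (r2 - m)) ?mulr0 //; lia.
Qed.

(* The two coefficient vectors agree at [0] and satisfy the same equations,
   so their difference (weighted by nonzero binomials) is a Newton polynomial
   with too many roots. *)
Lemma lambda_coef_unique n r1 r2 s (d : nat -> K) :
  (s.+1 <= r1)%N -> (s.+1 <= n - r1)%N -> (s.+1 <= r2)%N -> d 0%N = 1 ->
  (forall m, (r2 - s <= m <= r2)%N ->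
     \sum_(j < s.+2) d j * 'C(m, j)%:R * 'C(n - s - j, r1 - s)%:R = 0) ->
  forall j, (j < s.+2)%N -> d j = lambda_coef n r1 r2 s.+1 j.
Proof.
move=> h1 h2 h3 d0 deqn.
pose c j : K := 'C(n - s - j, r1 - s)%:R.
have c_neq0 j : (j < s.+2)%N -> c j != 0 by move=> hj; rewrite pnatr_eq0 -lt0n bin_gt0; lia.
pose g j := (d j - lambda_coef n r1 r2 s.+1 j) * c j.
have g0 : newton_poly g s.+2 = 0.
  apply: (@newton_poly_roots_eq0 _ _ _ (r2 - s)); first by lia.
    by rewrite /g d0 lambda_coef0 subrr mul0r.
  move=> m hm; rewrite horner_newton_poly.
  have hm' : (r2 - s <= m <= r2)%N by lia.
  transitivity (\sum_(j < s.+2) d j * 'C(m, j)%:R * 'C(n - s - j, r1 - s)%:R -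
    \sum_(j < s.+2) lambda_coef n r1 r2 s.+1 j * 'C(m, j)%:R * 'C(n - s - j, r1 - s)%:R).
    by rewrite -sumrB; apply: eq_bigr => j _; rewrite binomC_natr /g /c; ring.
  by rewrite deqn // lambda_coef_eqn // subrr.
move=> j hj; have /eqP := newton_poly_eq0 g0 hj.
by rewrite mulf_eq0 (negbTE (c_neq0 j hj)) orbF subr_eq0 => /eqP.
Qed.

Lemma natr_subr1 (a b : nat) : a = b.+1 -> (a%:R - 1 : K) = b%:R.
Proof. by move=> ->; rewrite -natr1 addrK. Qed.

Lemma lambda_coefS n r1 r2 s j : (s < r1)%N -> (s < n - r1)%N -> (s < r2)%N ->
  lambda_coef n r1 r2 s.+1 j.+1 =
  - ((s.+1 * (n - s.+1 + 1))%N%:R / (r2 * (n - r1))%N%:R) *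
  lambda_coef (n - 2) (r1 - 1) (r2 - 1) s j.
Proof.
move=> h1 h2 h3; rewrite /lambda_coef !ffactSl (@natr_subr1 s.+1 s) //.
rewrite (@natr_subr1 (n - s.+1 + 1) (n - 2 - s + 1)); last by lia.
rewrite (@natr_subr1 (n - r1) (n - 2 - (r1 - 1))); last by lia.
rewrite (@natr_subr1 r2 (r2 - 1)); last by lia.
by rewrite !natrM !invfM exprS; ring.
Qed.

Lemma lambda_coef_last n r1 r2 s :
  lambda_coef n r1 r2 s s / s`!%:R =
  (-1) ^+ s * ffact ((n - s + 1)%N%:R : K) s / (ffact ((n - r1)%N%:R) s * ffact (r2%:R) s).
Proof.
rewrite /lambda_coef ffact_natr ffactnn.
set B := ffact _ s; set C := ffact _ s; set D := ffact _ s.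
rewrite (_ : (-1) ^+ s * (s`!%:R * B) / (C * D) = (-1) ^+ s * B / (C * D) * s`!%:R).
  by rewrite mulfK ?natr_fact_neq0.
by ring.
Qed.

End LambdaCoefficients.

Section SetCounting.
Variable T : finType.
Local Open Scope nat_scope.

Lemma card_supsets_disjoint (z A : {set T}) r : [disjoint z & A] -> #|z| <= r ->
  #|[set x : {set T} | [&& z \subset x, [disjoint x & A] & #|x| == r]]|
  = 'C(#|T| - #|z| - #|A|, r - #|z|).
Proof.
move=> dzA hr; set Y := ~: (z :|: A).
have cardY : #|Y| = #|T| - #|z| - #|A|.
  by have := cardsC (z :|: A); rewrite -/Y cardsU (disjoint_setI0 dzA) cards0; lia.
rewrite -cardY -cards_draws -[X in _ = X](@card_in_imset _ _ (fun y => y :|: z)); last first.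
  move=> y1 y2; rewrite !inE /Y setCU => /andP [y1z _] /andP [y2z _] e.
  have yzK (y : {set T}) : y \subset ~: z :&: ~: A -> (y :|: z) :\: z = y.
    move=> /subsetIP [yz _]; rewrite setDUl setDv setU0.
    by apply/setDidPl; rewrite disjoints_subset.
  by rewrite -(yzK _ y1z) -(yzK _ y2z) e.
apply: eq_card => x; rewrite inE; apply/and3P/imsetP.
- case=> zx dxA /eqP cx; exists (x :\: z).
    rewrite inE /Y setCU subsetI cardsDS // cx eqxx andbT.
    apply/andP; split; apply/subsetP => i; rewrite !inE => /andP [iz ix] //.
    by move: dxA; rewrite disjoints_subset => /subsetP /(_ i ix); rewrite inE.
  by rewrite setUC -{1}(setID x z) (setIidPr zx) setUC.
- case=> y; rewrite inE /Y setCU subsetI => /andP [/andP [yz yA] /eqP cy] ->.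
  split; first exact: subsetUr.
    by rewrite disjoints_subset subUset yA -disjoints_subset.
  rewrite cardsU (disjoint_setI0 _) ?cards0 ?cy; first lia.
  by rewrite disjoints_subset.
Qed.

(* Double counting of pairs (A, x1) with A a j-subset of x2 missing x1. *)
Lemma sum_binom_card_setD (z x2 : {set T}) r j : #|z| <= r ->
  \sum_(x1 : {set T} | (z \subset x1) && (#|x1| == r)) 'C(#|x2 :\: x1|, j)
  = 'C(#|x2 :\: z|, j) * 'C(#|T| - #|z| - j, r - #|z|).
Proof.
move=> hr.
transitivity (\sum_(x1 : {set T} | (z \subset x1) && (#|x1| == r))
               \sum_(A : {set T} | (A \subset x2 :\: x1) && (#|A| == j)) 1).
  by apply: eq_bigr => x1 _; rewrite -cards_draws -sum1_card; apply: eq_bigl => A; rewrite inE.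
rewrite (exchange_big_dep (fun A : {set T} => (A \subset x2 :\: z) && (#|A| == j))) /=; last first.
  move=> x1 A /andP [zx1 _] /andP [Ax2 ->]; rewrite andbT.
  exact: subset_trans Ax2 (setDS _ zx1).
rewrite -cards_draws -sum1_card big_distrl /=.
apply: eq_big => [A | A /andP [Ax2z /eqP cA]]; first by rewrite inE.
have dzA : [disjoint z & A] by move: Ax2z; rewrite subsetD disjoint_sym => /andP [].
rewrite mul1n -cA -card_supsets_disjoint // -[RHS]sum1_card; apply: eq_bigl => x1.
have Ax2 : A \subset x2 by move: Ax2z; rewrite subsetD => /andP [].
rewrite !inE subsetD Ax2 eqxx andbT (disjoint_sym A).
by case: (z \subset x1); case: (#|x1| == r); case: [disjoint x1 & A].
Qed.

End SetCounting.

Section Polytabloid.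
Variables (R : realType) (n s : nat) (a b : {ffun 'I_s -> 'I_n}).
Hypothesis tab_ab : tableau_ok a b.

Let a_inj : injective a.
Proof. by case/and3P: tab_ab => /injectiveP. Qed.

Let b_inj : injective b.
Proof. by case/and3P: tab_ab => _ /injectiveP. Qed.

Let a_neq_b i j : a i != b j.
Proof. by case/and3P: tab_ab => _ _ /forallP /(_ i) /forallP. Qed.

(* [e i] says whether column [i] is flipped, i.e. whether [a i] (rather than
   [b i]) lies in the second row of the tabloid. *)
Definition flipped_row (e : {ffun 'I_s -> bool}) : {set 'I_n} :=
  [set (if e i then a i else b i) | i in 'I_s].

Definition flip_col (j : 'I_s) (e : {ffun 'I_s -> bool}) : {ffun 'I_s -> bool} :=
  [ffun i => if i == j then ~~ e i else e i].

Definition col_tperm (j : 'I_s) : {perm 'I_n} := tperm (a j) (b j).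

Lemma polytabloidE x : polytabloid R a b x =
  \sum_(e : {ffun 'I_s -> bool}) (-1) ^+ #|[set i | e i]| * (x == flipped_row e)%:R.
Proof. by rewrite sum_ffunE; apply: eq_bigr => e _; rewrite !ffunE. Qed.

Lemma polytabloid_in_Specht : polytabloid R a b \in Specht R n s.
Proof. by apply: memv_span; apply/mapP; exists (a, b); rewrite ?mem_enum. Qed.

Lemma flipped_row_inj : injective flipped_row.
Proof.
suff flip_in e e' i : flipped_row e = flipped_row e' -> e i -> e' i.
  by move=> e e' ee'; apply/ffunP => i; apply/idP/idP; apply: flip_in.
move=> ee' ei; have : a i \in flipped_row e' by rewrite -ee'; apply/imsetP; exists i; rewrite ?ei.
case/imsetP => k _; case: ifP => [ek /a_inj -> // | _ abk].
by have := a_neq_b i k; rewrite abk eqxx.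
Qed.

Lemma polytabloid_neq0 : polytabloid R a b != 0.
Proof.
pose e0 : {ffun 'I_s -> bool} := [ffun => false].
apply/eqP => /ffunP /(_ (flipped_row e0)); rewrite polytabloidE ffunE (bigD1 e0) //=.
rewrite eqxx big1 => [|e ne0]; last by rewrite (inj_eq flipped_row_inj) eq_sym (negbTE ne0) mulr0.
have -> : [set i | e0 i] = set0 by apply/setP => i; rewrite !inE ffunE.
by rewrite cards0 expr0 mulr1 addr0 => /eqP; rewrite oner_eq0.
Qed.

Lemma flip_colK j : involutive (flip_col j).
Proof. by move=> e; apply/ffunP => i; rewrite !ffunE; case: eqP; rewrite ?negbK. Qed.

Lemma col_tperm_flipped_row j e : col_tperm j @: flipped_row e = flipped_row (flip_col j e).
Proof.
rewrite /flipped_row -imset_comp; apply: eq_imset => i /=; rewrite ffunE /col_tperm.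
have [->|nij] := eqVneq i j; first by case: (e j); rewrite /= ?tpermL ?tpermR.
have [anij bnij] : a i != a j /\ b i != b j by rewrite !(inj_eq a_inj, inj_eq b_inj).
by case: (e i); rewrite tpermD // 1?eq_sym.
Qed.

Lemma sign_flip_col j e :
  (-1) ^+ #|[set i | flip_col j e i]| = - (-1) ^+ #|[set i | e i]| :> R[i].
Proof.
rewrite (cardsD1 j [set i | e i]) (cardsD1 j [set i | flip_col j e i]).
have -> : [set i | flip_col j e i] :\ j = [set i | e i] :\ j.
  by apply/setP => i; rewrite !inE ffunE; case: eqP.
by rewrite !inE ffunE eqxx !exprD; case: (e j); rewrite /= ?expr1 ?expr0 ?mulN1r ?mul1r ?opprK.
Qed.

Lemma rho_col_tperm_polytabloid j :
  rho (col_tperm j) (polytabloid R a b) = - polytabloid R a b.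
Proof.
apply/ffunP => x; rewrite !ffunE !polytabloidE -sumrN /col_tperm tpermV -/(col_tperm j).
rewrite (reindex_inj (inv_inj (flip_colK j))) /=; apply: eq_bigr => e _.
rewrite sign_flip_col mulNr; congr (- (_ * _%:R)).
by rewrite -col_tperm_flipped_row (inj_eq (imset_inj (@perm_inj _ _))).
Qed.

(* Pigeonhole on the [s] disjoint columns. *)
Lemma exists_col_notin (z : {set 'I_n}) : (#|z| < s)%N ->
  exists j, (a j \notin z) && (b j \notin z).
Proof.
move=> zs; apply/existsP; apply: contraLR zs; rewrite negb_exists -leqNgt => /forallP zab.
pose c j := if a j \in z then a j else b j.
have c_inj : injective c.
  move=> i j; rewrite /c; do 2 case: ifP => _; move=> e;
    first [exact: a_inj e | exact: b_inj e | by have := a_neq_b i j; rewrite e eqxx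
           | by have := a_neq_b j i; rewrite e eqxx].
rewrite -[s]card_ord -(card_imset _ c_inj); apply/subset_leq_card/subsetP => _ /imsetP [j _ ->].
by move: (zab j); rewrite /c negb_and !negbK; case: ifP => // _ /orP [].
Qed.

Lemma col_tperm_fix j (z : {set 'I_n}) : a j \notin z -> b j \notin z ->
  col_tperm j @: z = z.
Proof.
move=> az bz; rewrite -[RHS]imset_id; apply: eq_in_imset => x xz.
by rewrite tpermD //; apply/eqP => e; [move: az | move: bz]; rewrite e xz.
Qed.

End Polytabloid.

Lemma tableau_ok_exists n s : (s + s <= n)%N ->
  exists a b : {ffun 'I_s -> 'I_n}, tableau_ok a b.
Proof.
move=> hs.
have ltb (i : 'I_s) : (s + i < n)%N by apply: leq_trans hs; rewrite ltn_add2l.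
exists [ffun i => Ordinal (leq_trans (ltn_ord i) (leq_trans (leq_addr s s) hs))].
exists [ffun i => Ordinal (ltb i)].
apply/and3P; split.
- by apply/injectiveP => i j; rewrite !ffunE => -[] /val_inj.
- by apply/injectiveP => i j; rewrite !ffunE => -[] /addnI /val_inj.
- apply/forallP => i; apply/forallP => j; rewrite !ffunE -val_eqE /=.
  by rewrite neq_ltn (leq_trans (ltn_ord i) (leq_addr _ _)).
Qed.

Section PermImset.
Variables (T : finType) (g : {perm T}).

Lemma imset_permK (A : {set T}) : (g^-1)%g @: (g @: A) = A.
Proof. by rewrite -imset_comp (eq_imset _ (permK g)) imset_id. Qed.

Lemma imset_permKV (A : {set T}) : g @: ((g^-1)%g @: A) = A.
Proof. by rewrite -imset_comp (eq_imset _ (permKV g)) imset_id. Qed.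

Lemma imset_perm_subset (A B : {set T}) : (g @: A \subset g @: B) = (A \subset B).
Proof.
apply/idP/idP => [|/imsetS //]; rewrite -{2}(imset_permK A) -{2}(imset_permK B).
exact: imsetS.
Qed.

End PermImset.

Section DownOperator.
Variables (R : realType) (n : nat).

Definition down (k r : nat) (v : L2 R n) : L2 R n :=
  [ffun z : {set 'I_n} => if #|z| == k then
     \sum_(x : {set 'I_n} | (z \subset x) && (#|x| == r)) v x else 0].

Fact down_is_linear k r : linear (down k r).
Proof.
move=> c u v; apply/ffunP => z; rewrite !ffunE; case: ifP => _; last by rewrite scaler0 addr0.
by rewrite scaler_sumr -big_split; apply: eq_bigr => x _; rewrite !ffunE.
Qed.

HB.instance Definition _ k r :=
  GRing.isLinear.Build R[i] (L2 R n) (L2 R n) _ (down k r) (down_is_linear k r).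

Lemma down_rho k r (g : {perm 'I_n}) v : down k r (rho g v) = rho g (down k r v).
Proof.
apply/ffunP => z; rewrite !ffunE card_imset; last exact: perm_inj.
case: ifP => // _.
rewrite (reindex_inj (imset_inj (@perm_inj _ g))) /=; apply: eq_big => [x | x _].
  by rewrite -{1}(imset_permKV g z) imset_perm_subset card_imset //; apply: perm_inj.
by rewrite /rho ffunE imset_permK.
Qed.

(* Each [k]-set misses a column (a j, b j), which is then swapped without
   moving the set, so an antisymmetric [v] has [down k r v = - down k r v]. *)
Lemma down_col_antisym_eq0 s (a b : {ffun 'I_s -> 'I_n}) k r (v : L2 R n) :
  tableau_ok a b -> (k < s)%N -> (forall j, rho (col_tperm a b j) v = - v) ->
  down k r v = 0.
Proof.
move=> tab_ab ks v_anti; apply/ffunP => z; rewrite [RHS]ffunE.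
case: (eqVneq #|z| k) => [cz|]; last by rewrite ffunE => /negbTE ->.
have [j /andP [az bz]] : exists j, (a j \notin z) && (b j \notin z).
  by apply: exists_col_notin; rewrite ?cz.
have := congr1 (fun f : L2 R n => f z) (down_rho k r (col_tperm a b j) v).
rewrite v_anti linearN !ffunE /col_tperm tpermV -/(col_tperm a b j) col_tperm_fix //.
rewrite cz eqxx => /eqP; rewrite eq_sym -addr_eq0 -mulr2n mulrn_eq0 /=.
by move/eqP.
Qed.

End DownOperator.

Lemma rho0 (R : realType) n (g : {perm 'I_n}) : rho g (0 : L2 R n) = 0.
Proof. by apply/ffunP => x; rewrite !ffunE. Qed.

(* The kernel of an equivariant map meets an irreducible subspace in an
   invariant subspace, hence in nothing or everything. *)
Lemma Girreducible_lker (R : realType) n (V : {vspace L2 R n}) (f : 'Hom(L2 R n, L2 R n)) v :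
  Girreducible V -> (forall g w, f (rho g w) = rho g (f w)) ->
  v \in V -> v != 0 -> f v = 0 -> forall w, w \in V -> f w = 0.
Proof.
case=> V_inv _ V_irr f_equiv vV v_neq0 fv0.
have K_inv : Ginvariant (V :&: lker f)%VS.
  move=> g w; rewrite !memv_cap !memv_ker => /andP [wV /eqP fw0].
  by rewrite V_inv //= f_equiv fw0 rho0.
have [K0|KV] := V_irr _ (capvSl _ _) K_inv.
  have : v \in (V :&: lker f)%VS by rewrite memv_cap vV memv_ker fv0 eqxx.
  by rewrite K0 memv0 (negbTE v_neq0).
by move=> w; rewrite -KV memv_cap memv_ker => /andP [_ /eqP].
Qed.

(* Pull the antisymmetric polytabloid back through the isomorphism, which is
   injective on [V] by the dimension count. *)
Lemma Giso_Specht_col_antisym (R : realType) n s (V : {vspace L2 R n})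
    (a b : {ffun 'I_s -> 'I_n}) :
  tableau_ok a b -> Ginvariant V -> Giso V (Specht R n s) ->
  exists2 v, v \in V & v != 0 /\ forall j, rho (col_tperm a b j) v = - v.
Proof.
move=> tab_ab V_inv [f [fV dimV f_equiv]].
have := polytabloid_in_Specht R tab_ab; rewrite -fV => /memv_imgP [v vV fv].
have ker0 : (V :&: lker f)%VS = 0%VS.
  apply/eqP; rewrite -dimv_eq0; have := limg_ker_dim f V.
  by rewrite fV dimV -{2}[\dim V]add0n => /addIn ->.
exists v => //; split=> [|j].
  by apply: contraNneq (polytabloid_neq0 R tab_ab) => v0; rewrite fv v0 linear0.
have : rho (col_tperm a b j) v + v \in (V :&: lker f)%VS.
  rewrite memv_cap memvD ?V_inv //= memv_ker linearD /= f_equiv //.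
  by rewrite -fv rho_col_tperm_polytabloid // addNr.
by rewrite ker0 memv0 addr_eq0 => /eqP.
Qed.

Lemma L2rs_down_eq0 (R : realType) n r s k r' (V : {vspace L2 R n}) :
  (s + s <= n)%N -> (k < s)%N -> is_L2rs r s V ->
  forall w, w \in V -> down k r' w = 0.
Proof.
move=> hs ks [_ V_irr V_iso]; have [a [b tab_ab]] := tableau_ok_exists hs.
have V_inv : Ginvariant V by case: V_irr.
have [v vV [v_neq0 v_anti]] := Giso_Specht_col_antisym tab_ab V_inv V_iso.
have down_equiv (g : {perm 'I_n}) (u : L2 R n) : linfun (down k r') (rho g u) = rho g (linfun (down k r') u).
  by rewrite !lfunE /= down_rho.
have down_v : linfun (down k r') v = 0.
  by rewrite lfunE; apply: down_col_antisym_eq0 tab_ab ks v_anti.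
by move=> w wV; have := Girreducible_lker V_irr down_equiv vV v_neq0 down_v wV; rewrite lfunE.
Qed.

Lemma card_setD_bounds n (x1 x2 : {set 'I_n}) :
  (#|x2| - #|x1| <= #|x2 :\: x1| <= minn (n - #|x1|) #|x2|)%N.
Proof.
have := cardsD x2 x1; have := cardsC x1; rewrite card_ord.
have : (#|x2 :&: x1| <= #|x1|)%N by apply/subset_leq_card/subsetIr.
have : (#|x2 :\: x1| <= #|~: x1|)%N by rewrite setDE; apply/subset_leq_card/subsetIr.
have : (#|x2 :\: x1| <= #|x2|)%N by apply/subset_leq_card/subsetDl.
lia.
Qed.

(* Test [Lambda] against the indicator of the [r1]-supersets of [z]: it is
   orthogonal to [L^2(X_r1)_s.+1] because [down s r1] kills that space. *)
Lemma lambda_poly_sum_supsets (R : realType) n r1 r2 s (p : {poly R[i]}) :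
  (s.+1 + s.+1 <= n)%N -> is_lambda_poly n r1 r2 s.+1 p ->
  forall z x2 : {set 'I_n}, #|z| = s -> #|x2| = r2 ->
  \sum_(x1 : {set 'I_n} | (z \subset x1) && (#|x1| == r1)) p.[#|x2 :\: x1|%:R] = 0.
Proof.
move=> hs [V1 [V2 [Lam [lam [[V1_L2 _ [_ _ Lam_perp Lam_ker]] [_ _ p_lam]]]]]] z x2 cz cx2.
pose psi : L2 R n := [ffun x : {set 'I_n} => (((z \subset x) && (#|x| == r1))%:R : R[i])].
have Lam_psi : Lam psi = 0.
  apply: Lam_perp => w wV; have := L2rs_down_eq0 r1 hs (ltnSn s) V1_L2 wV.
  move=> /ffunP /(_ z); rewrite !ffunE cz eqxx => down_w; rewrite /dotL2.
  transitivity (\sum_(x : {set 'I_n} | (z \subset x) && (#|x| == r1)) (w x)^*).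
    rewrite [RHS]big_mkcond; apply: eq_bigr => x _; rewrite ffunE.
    by case: (_ && _); rewrite ?mul1r ?mul0r.
  by rewrite -rmorph_sum down_w rmorph0.
have := Lam_ker psi x2 cx2; rewrite Lam_psi ffunE => Lam_psi_x2.
rewrite [RHS]Lam_psi_x2 big_mkcond [RHS]big_mkcond /=; apply: eq_bigr => x1 _; rewrite ffunE.
case: (boolP (#|x1| == r1)) => [/eqP cx1|]; rewrite ?andbT ?andbF ?mulr0 //.
case: (z \subset x1); rewrite ?mulr0 ?mulr1 // p_lam //.
by have := card_setD_bounds x1 x2; rewrite cx1 cx2.
Qed.

Section PrefixSets.
Variable n : nat.
Local Open Scope nat_scope.

Definition prefix_set (b : nat) : {set 'I_n} := [set k : 'I_n | k < b].

Lemma card_prefix_set b : b <= n -> #|prefix_set b| = b.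
Proof.
move=> bn; have -> : prefix_set b = widen_ord bn @: [set: 'I_b].
  apply/setP => k; rewrite inE; apply/idP/imsetP => [kb|[j _ ->]]; last exact: (ltn_ord j).
  by exists (Ordinal kb); last apply: val_inj.
rewrite card_imset ?cardsT ?card_ord //.
by move=> i j /(congr1 val) /= /val_inj.
Qed.

Lemma prefix_set_subset a b : a <= b -> prefix_set a \subset prefix_set b.
Proof. by move=> ab; apply/subsetP => k; rewrite !inE => /leq_trans; apply. Qed.

Lemma prefix_setD_subset a b c : c <= a -> prefix_set b :\: prefix_set c :\: prefix_set a =
  prefix_set b :\: prefix_set a.
Proof.
move=> ca; apply/setP => k; rewrite !inE; case: (ltnP k a) => //= ak.
by rewrite -leqNgt (leq_trans ca ak).
Qed.

(* [z = [0, k)] and [x2 = [k - i, k - i + r)] overlap in [i] points. *)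
Lemma exists_sets_card_setD k r i : i <= k -> i <= r -> k + r <= n ->
  exists z x2 : {set 'I_n}, [/\ #|z| = k, #|x2| = r & #|x2 :\: z| = r - i].
Proof.
move=> ik ir krn; exists (prefix_set k), (prefix_set (k - i + r) :\: prefix_set (k - i)).
rewrite prefix_setD_subset ?leq_subr // !cardsDS ?prefix_set_subset ?leq_addr //; last lia.
by rewrite !card_prefix_set; first split; lia.
Qed.

End PrefixSets.

Lemma Nmin_leP n r1 r2 s : (s <= Nmin n r1 r2)%N =
  [&& s <= r1, s <= n - r1, s <= r2 & s <= n - r2]%N.
Proof. by rewrite /Nmin !leq_min !andbA. Qed.

(* The kernel identity at the sets of [exists_sets_card_setD], combined with
   the double count [sum_binom_card_setD], gives the equations characterising
   [lambda_coef]. *)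
Lemma lambda_poly_newton (R : realType) n r1 r2 s (p : {poly R[i]}) :
  (s <= Nmin n r1 r2)%N -> is_lambda_poly n r1 r2 s p ->
  p = newton_poly (lambda_coef R[i] n r1 r2 s) s.+1.
Proof.
rewrite Nmin_leP => /and4P [sr1 snr1 sr2 snr2] p_lam.
have [p_size p0] : size p = s.+1 /\ p.[0] = 1.
  by case: p_lam => [? [? [? [? [_ [? ? _]]]]]].
have [d p_d] := newton_polyP (eq_leq p_size); rewrite p_d.
suff d_lc : forall j, (j < s.+1)%N -> d j = lambda_coef R[i] n r1 r2 s j.
  by apply: eq_bigr => j _; rewrite d_lc.
have d0 : d 0%N = 1.
  move: p0; rewrite p_d horner_newton_poly big_ord_recl /= binomC0 mulr1 big1 ?addr0 //.
  by move=> i _; rewrite -(mulr0n 1) binomC_natr bin0n mulr0.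
case: s sr1 snr1 sr2 snr2 p_lam p_size p_d => [|s] sr1 snr1 sr2 snr2 p_lam _ p_d.
  by move=> j; rewrite ltnS leqn0 => /eqP ->; rewrite d0 lambda_coef0.
apply: lambda_coef_unique => // m /andP [ms mr2].
have [z [x2 [cz cx2 czx2]]] := @exists_sets_card_setD n s r2 (r2 - m) ltac:(lia) ltac:(lia) ltac:(lia).
have hs : (s.+1 + s.+1 <= n)%N by lia.
have := lambda_poly_sum_supsets hs p_lam cz cx2.
rewrite p_d; under eq_bigr => x1 _ do rewrite horner_newton_poly.
rewrite exchange_big /= => sum_eq0; rewrite -[RHS]sum_eq0; apply: eq_bigr => j _.
rewrite -mulr_sumr -mulrA; congr (_ * _).
under eq_bigr => x1 _ do rewrite binomC_natr.
rewrite -natr_sum sum_binom_card_setD ?cz ?card_ord ?czx2; last lia.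
by rewrite natrM; congr (_ * _); congr ('C(_, _)%:R); lia.
Qed.

Theorem theorem3 (R : realType) (n r1 r2 s : nat) (p : {poly R[i]}) :
  (r1 <= n)%N -> (r2 <= n)%N -> (s <= Nmin n r1 r2)%N ->
  is_lambda_poly n r1 r2 s p ->
  [/\ (forall t : R[i],
         p.[t] = \sum_(0 <= j < s.+1)
                   (-1) ^+ j * binomC t j
                   * (ffact (s%:R : R[i]) j * ffact ((n - s + 1)%N%:R) j)
                   / (ffact ((n - r1)%N%:R) j * ffact (r2%:R) j)),
      (1 <= s)%N ->
        forall q : {poly R[i]}, is_lambda_poly (n - 2) (r1 - 1) (r2 - 1) (s - 1) q ->
        forall t : R[i],
          p.[t + 1] - p.[t] =
            - ((s * (n - s + 1))%N%:R / (r2 * (n - r1))%N%:R) * q.[t] &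
      lead_coef p =
        (-1) ^+ s * ffact ((n - s + 1)%N%:R : R[i]) s
        / (ffact ((n - r1)%N%:R) s * ffact (r2%:R) s)].
Proof.
move=> _ _ sN p_lam; have p_newton := lambda_poly_newton sN p_lam.
have p_size : size p = s.+1 by case: p_lam => [? [? [? [? [_ [? ? _]]]]]].
split.
- move=> t; rewrite {1}p_newton horner_newton_poly big_mkord.
  by apply: eq_bigr => j _; rewrite /lambda_coef; ring.
- case: s sN p_lam p_newton {p_size} => [//|s] sN _ p_newton _ q q_lam t.
  have sN' : (s <= Nmin (n - 2) (r1 - 1) (r2 - 1))%N by move: sN; rewrite !Nmin_leP; lia.
  move: sN; rewrite Nmin_leP => /and4P [sr1 snr1 sr2 _].
  rewrite subSS subn0 in q_lam; rewrite p_newton (lambda_poly_newton sN' q_lam).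
  rewrite newton_poly_addr1 !horner_newton_poly mulr_sumr; apply: eq_bigr => j _.
  by rewrite lambda_coefS // [RHS]mulrA.
- by rewrite /lead_coef p_size /= p_newton coef_newton_poly_last lambda_coef_last.
Qed.
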